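(* Let $\gamma:=2\Delta\lambda\max\{\lambda,\mu\}$ and $\nu:=(4\Delta\lambda\gamma)^d$. Then for all $\epsilon\in\mathbb R$, $\mathbf x\in\mathbb R^p$, $\mathbf b,\mathbf b'\in\mathbb R^V$ and $\mathbf w,\mathbf w'\in\mathbb R^E$ with $0\le\max\{\|\mathbf b-\mathbf b'\|_\infty,\|\mathbf w-\mathbf w'\|_\infty\}\le\epsilon\le1$, $$\|\mathfrak A(\mathbf x,\mathbf w,\mathbf b)-\mathfrak A(\mathbf x,\mathbf w',\mathbf b')\|_\infty\le\nu(\|\mathbf w\|_\infty+1)^d(\|\mathbf x\|_\infty+\|\mathbf b\|_\infty+1)\epsilon.$$
   Context: $\mathfrak A=(V,E,(\mathfrak a_v)_{v\in V})$ is an FNN architecture: $(V,E)$ is a finite dag and each $\mathfrak a_v:\mathbb R\to\mathbb R$ is Lipschitz continuous. Sources are input nodes $X_1,\dots,X_p$, sinks are output nodes $Y_1,\dots,Y_q$. For $\mathbf x\in\mathbb R^p$, $\mathbf w=(w_e)_{e\in E}$, $\mathbf b=(b_v)_{v\in V}$: $f_{\mathfrak A,X_i}=x_i$ and for non-input $v$, $f_{\mathfrak A,v}(\mathbf x,\mathbf w,\mathbf b)=\mathfrak a_v\big(b_v+\sum_{u:uv\in E}f_{\mathfrak A,u}(\mathbf x,\mathbf w,\mathbf b)w_{uv}\big)$; $\mathfrak A(\mathbf x,\mathbf w,\mathbf b)$ is the tuple of values at the outputs. $d$ is the depth of the dag, $\Delta\ge1$ its maximum in-degree, $\lambda\in\mathbb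 N_{>0}$ a Lipschitz constant for all $\mathfrak a_v$, and $\mu=\max_v\lceil|\mathfrak a_v(0)|\rceil$. *)

From HB Require Import structures.
From mathcomp Require Import all_boot all_order all_algebra.
From mathcomp Require Import reals.
Set Implicit Arguments. Unset Strict Implicit. Unset Printing Implicit Defensive.
Import Order.TTheory GRing.Theory Num.Theory.
Local Open Scope ring_scope.

Section FNN.
Variables (R : realType) (V : finType) (E : rel V).

Definition acyclic : Prop :=
  forall (v : V) (s : seq V), path E v s -> last v s = v -> s = [::].

Definition is_depth (d : nat) : Prop :=
  (exists (v : V) (s : seq V), path E v s /\ size s = d) /\
  (forall (v : V) (s : seq V), path E v s -> (size s <= d)%N).

Definition source (v : V) : bool := [forall u, ~~ E u v].
Definition sink (v : V) : bool := [forall u, ~~ E v u].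

Definition max_indeg : nat := \max_(v : V) #|[set u | E u v]|.

Definition mu_of (a : V -> R -> R) : nat :=
  \max_(v : V) `|Num.ceil `|a v 0%R| |%N.

Definition normV (b : V -> R) : R := \big[Num.max/0]_(v : V) `|b v|.
Definition normE (w : V -> V -> R) : R :=
  \big[Num.max/0]_(e : V * V | E e.1 e.2) `|w e.1 e.2|.
Definition normI (n : nat) (x : 'I_n -> R) : R := \big[Num.max/0]_(i < n) `|x i|.

Variables (a : V -> R -> R) (p q : nat) (inp : 'I_p -> V) (out : 'I_q -> V).

Definition in_val (x : 'I_p -> R) (v : V) : R :=
  if [pick i | inp i == v] is Some i then x i else 0.

(* k rounds of the recursive evaluation f_{A,v}; on a dag this is exact
   once k >= #|V| *)
Fixpoint eval_iter (k : nat) (x : 'I_p -> R) (w : V -> V -> R) (b : V -> R)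
    (v : V) : R :=
  match k with
  | 0 => 0
  | k'.+1 =>
      if [exists i, inp i == v] then in_val x v
      else a v (b v + \sum_(u | E u v) eval_iter k' x w b u * w u v)
  end.

Definition node_val x w b (v : V) : R := eval_iter #|V| x w b v.

Definition net (x : 'I_p -> R) (w : V -> V -> R) (b : V -> R) : 'I_q -> R :=
  fun j => node_val x w b (out j).

End FNN.

From HB Require Import structures.
From mathcomp Require Import all_boot all_order all_algebra.
From mathcomp Require Import reals.
From mathcomp Require Import ring lra.
Set Implicit Arguments. Unset Strict Implicit. Unset Printing Implicit Defensive.
Import Order.TTheory GRing.Theory Num.Theory.
Local Open Scope ring_scope.

(* Induct on the height of a node, the number of edges of the longest path
   ending there.  Since |a_v s| <= mu + lam |s|, a node of height h has value
   at most (gamma (|w| + 1))^h (|x| + |b| + 1).  Along each incoming edge,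
   f w - f' w' = f (w - w') + (f - f') w' with |w'| <= |w| + 1, so an error
   bound e_h at height h yields lam (eps + Delta (value_h eps + e_h (|w| + 1)))
   <= 4 Delta lam gamma (|w| + 1) e_h at height h + 1.  Acyclicity, the
   injectivity of inp and out and the description of the sinks are not
   needed: the depth bound d alone controls the recursion. *)

Section Norms.
Variables (R : realType) (V : finType).

Lemma normV_ge0 (b : V -> R) : 0 <= normV b.
Proof. exact: bigmax_ge_id. Qed.

Lemma normV_ge (b : V -> R) v : `|b v| <= normV b.
Proof. exact: (le_bigmax_cond _ (fun v => `|b v|)). Qed.

Lemma normE_ge0 (E : rel V) (w : V -> V -> R) : 0 <= normE E w.
Proof. exact: bigmax_ge_id. Qed.

Lemma normE_ge (E : rel V) (w : V -> V -> R) u v :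
  E u v -> `|w u v| <= normE E w.
Proof. exact: (@le_bigmax_cond _ _ _ 0 (u, v) _ (fun e => `|w e.1 e.2|)). Qed.

Lemma normI_ge0 n (x : 'I_n -> R) : 0 <= normI x.
Proof. exact: bigmax_ge_id. Qed.

Lemma normI_ge n (x : 'I_n -> R) i : `|x i| <= normI x.
Proof. exact: (le_bigmax_cond _ (fun i => `|x i|)). Qed.

Lemma norm_in_val_le p (inp : 'I_p -> V) (x : 'I_p -> R) v :
  `|in_val inp x v| <= normI x.
Proof.
rewrite /in_val; case: pickP => [i _|_]; first exact: normI_ge.
by rewrite normr0 normI_ge0.
Qed.

Lemma norm_act0_le_mu (a : V -> R -> R) v : `|a v 0| <= (mu_of a)%:R.
Proof.
apply: le_trans (ceil_ge _) _.
have ceil0 : 0 <= Num.ceil `|a v 0|.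
  by rewrite ceil_ge0 (lt_le_trans _ (normr_ge0 _)) // ltrN10.
rewrite -(gez0_abs ceil0) -natr_absz ler_nat.
exact: (leq_bigmax v).
Qed.

End Norms.

Lemma lipschitz_norm_le (R : numDomainType) (f : R -> R) (L s : R) :
  (forall s t, `|f s - f t| <= L * `|s - t|) -> `|f s| <= `|f 0| + L * `|s|.
Proof.
move=> lip; rewrite -[f s](subrK (f 0)) addrC.
by apply: le_trans (ler_normD _ _) _; rewrite lerD2l -{2}[s]subr0; apply: lip.
Qed.

Lemma sum_indeg_le (R : numDomainType) (V : finType) (E : rel V) v
    (F : V -> R) (D c : R) :
  #|[set u | E u v]|%:R <= D -> 0 <= c -> (forall u, E u v -> F u <= c) ->
  \sum_(u | E u v) F u <= D * c.
Proof.
move=> indeg c0 Fc; apply: le_trans (ler_sum _ Fc) _.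
by rewrite sumr_const -mulr_natl ler_wpM2r // -cardsE.
Qed.

Section Height.
Variables (V : finType) (E : rel V).

Definition height_le (v : V) (h : nat) : Prop :=
  forall u s, path E u s -> last u s = v -> (size s <= h)%N.

Lemma height_le_depth d v : is_depth E d -> height_le v d.
Proof. by move=> [_ depth] u s /depth. Qed.

Lemma height_le_pred v u h : height_le v h.+1 -> E u v -> height_le u h.
Proof.
move=> hv Euv u0 s su0 last_u.
have := hv u0 (rcons s v).
by rewrite rcons_path su0 last_u Euv last_rcons size_rcons; apply.
Qed.

Lemma height_le_gt0 v h : ~~ source E v -> height_le v h -> (0 < h)%N.
Proof.
rewrite /source negb_forall => /existsP [u]; rewrite negbK => Euv hv.
by apply: (hv u [:: v]); rewrite /= ?Euv.
Qed.

End Height.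

Lemma value_step_arith (R : realFieldType) (L D m B Wn T : R) :
  1 <= L -> 1 <= D -> L <= m -> 0 <= B -> 0 <= Wn -> 1 + B <= T ->
  m + L * (B + D * (T * Wn)) <= 2 * D * L * m * (Wn + 1) * T.
Proof.
move=> L1 D1 Lm B0 Wn0 BT.
have DL1 : 1 <= D * L by rewrite mulr_ege1.
have mT0 : 0 <= m * T by rewrite mulr_ge0; lra.
have affine_le : m + L * B <= D * L * (Wn + 1) * (m * T).
  have DLW1 : 1 <= D * L * (Wn + 1) by rewrite mulr_ege1 // lerDr.
  have : m + L * B <= m * T by nra.
  nra.
have sum_le : D * L * (T * Wn) <= D * L * (Wn + 1) * (m * T).
  have TW0 : 0 <= T * (Wn + 1) by rewrite mulr_ge0; lra.
  have : T * Wn <= (Wn + 1) * (m * T) by nra.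
  nra.
nra.
Qed.
Lemma perturb_step_arith (R : realFieldType) (L D g W P N eps : R) :
  1 <= L -> 1 <= D -> 1 <= g -> 1 <= W -> 1 <= P -> P <= N -> 0 <= eps ->
  L * (eps + D * (P * eps + N * eps * W)) <= 4 * D * L * g * W * N * eps.
Proof.
move=> L1 D1 g1 W1 P1 PN eps0.
have DL1 : 1 <= D * L by rewrite mulr_ege1.
have [eps_le P_le] : eps <= N * W * eps /\ P * eps <= N * W * eps.
  have NW1 : 1 <= N * W by rewrite mulr_ege1 //; lra.
  split; first by rewrite ler_peMl.
  by rewrite ler_wpM2r // (le_trans PN) // ler_peMr //; lra.
have : eps + D * (P * eps + N * eps * W) <= 3 * D * (N * W * eps) by nra.
move/(ler_wpM2l (le_trans ler01 L1)).
have : 0 <= D * L * (N * W * eps) by rewrite mulr_ge0 //; lra.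
nra.
Qed.

Section Perturbation.
Variables (R : realType) (V : finType) (E : rel V) (a : V -> R -> R).
Variables (p : nat) (inp : 'I_p -> V) (L D m : R).
Hypothesis L_ge1 : 1 <= L.
Hypothesis D_ge1 : 1 <= D.
Hypothesis L_le_m : L <= m.
Hypothesis act0_le : forall v, `|a v 0| <= m.
Hypothesis act_lipschitz : forall v s t, `|a v s - a v t| <= L * `|s - t|.
Hypothesis indeg_le : forall v, #|[set u | E u v]|%:R <= D.
Hypothesis source_inp : forall v, source E v -> exists i, inp i = v.

Local Notation gamma := (2 * D * L * m).
Local Notation kappa := (4 * D * L * gamma).

Lemma gamma_ge1 : 1 <= gamma.
Proof. by rewrite !mulr_ege1 ?ler1n //; apply: le_trans L_le_m. Qed.

Lemma nonsource_height_gt0 v h :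
  ~~ [exists i, inp i == v] -> height_le E v h -> (0 < h)%N.
Proof.
move=> not_inp; apply: height_le_gt0; apply: contra not_inp => /source_inp [i <-].
by apply/existsP; exists i.
Qed.

Variables (x : 'I_p -> R) (w : V -> V -> R) (b : V -> R).
Local Notation W := (normE E w + 1).
Local Notation M := (normI x + normV b + 1).
Local Notation f k := (eval_iter E a inp k x w b).

Lemma W_ge1 : 1 <= W.
Proof. by rewrite lerDr normE_ge0. Qed.

Lemma M_ge1 : 1 <= M.
Proof. by rewrite lerDr addr_ge0 ?normI_ge0 ?normV_ge0. Qed.

Lemma M_le_layer_bound c h : 1 <= c -> M <= (c * W) ^+ h * M.
Proof.
by move=> c1; rewrite ler_peMl ?exprn_ege1 ?mulr_ege1 ?W_ge1 // (le_trans ler01 M_ge1).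
Qed.

Lemma layer_bound_ge1 c h : 1 <= c -> 1 <= (c * W) ^+ h * M.
Proof. by move=> c1; apply: le_trans M_ge1 (M_le_layer_bound _ c1). Qed.

Lemma gamma_le_kappa : gamma <= kappa.
Proof.
by rewrite ler_peMl ?(le_trans ler01 gamma_ge1) // !mulr_ege1 // ler1n.
Qed.

Lemma layer_bound_mono c c' h :
  0 <= c -> c <= c' -> (c * W) ^+ h * M <= (c' * W) ^+ h * M.
Proof.
move=> c0 cc'; have W0 : 0 <= W := le_trans ler01 W_ge1.
rewrite ler_wpM2r ?(le_trans ler01 M_ge1) // lerXn2r ?nnegrE ?ler_wpM2r //.
all: by rewrite mulr_ge0 // (le_trans c0).
Qed.

Lemma eval_iter_bound k v h :
  height_le E v h -> `|f k v| <= (gamma * W) ^+ h * M.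
Proof.
elim: k v h => [|k IH] v h hv /=.
  by rewrite normr0 (le_trans ler01) // layer_bound_ge1 // gamma_ge1.
case: ifPn => [_|not_inp].
  apply: le_trans (norm_in_val_le _ _ _) (le_trans _ (M_le_layer_bound _ gamma_ge1)).
  by rewrite -addrA lerDl addr_ge0 ?normV_ge0.
case: h hv => [|h] hv; first by have := nonsource_height_gt0 not_inp hv.
set T := (gamma * W) ^+ h * M.
have M_le_T : M <= T by apply: M_le_layer_bound gamma_ge1.
have sum_le : `|\sum_(u | E u v) f k u * w u v| <= D * (T * normE E w).
  apply: le_trans (ler_norm_sum _ _ _) (sum_indeg_le (indeg_le v) _ _).
    by rewrite mulr_ge0 ?normE_ge0 // (le_trans ler01) // (le_trans M_ge1).
  move=> u Euv; rewrite normrM ler_pM ?normr_ge0 ?normE_ge //.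
  exact: IH (height_le_pred hv Euv).
apply: le_trans (lipschitz_norm_le _ (act_lipschitz v)) _.
rewrite exprS -mulrA.
apply: le_trans (value_step_arith L_ge1 D_ge1 L_le_m (normV_ge0 b) (normE_ge0 E w) _).
  apply: lerD (act0_le v) (ler_wpM2l (le_trans ler01 L_ge1) _).
  exact: le_trans (ler_normD _ _) (lerD (normV_ge b v) sum_le).
by apply: le_trans M_le_T; rewrite addrC lerD2r lerDr normI_ge0.
Qed.

Variables (w' : V -> V -> R) (b' : V -> R) (eps : R).
Hypothesis eps_ge0 : 0 <= eps.
Hypothesis eps_le1 : eps <= 1.
Hypothesis bias_close : forall v, `|b v - b' v| <= eps.
Hypothesis weight_close : forall u v, E u v -> `|w u v - w' u v| <= eps.
Local Notation f' k := (eval_iter E a inp k x w' b').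

Lemma norm_perturbed_weight_le u v : E u v -> `|w' u v| <= W.
Proof.
move=> Euv; rewrite -[w' u v](subrK (w u v)) addrC -opprB.
exact: le_trans (ler_normB _ _) (lerD (normE_ge _ Euv) (le_trans (weight_close Euv) eps_le1)).
Qed.

Lemma eval_iter_perturb k v h :
  height_le E v h -> `|f k v - f' k v| <= (kappa * W) ^+ h * M * eps.
Proof.
have bound_ge0 h' : 0 <= (kappa * W) ^+ h' * M * eps.
  by rewrite mulr_ge0 // (le_trans ler01) // layer_bound_ge1 // (le_trans gamma_ge1 gamma_le_kappa).
elim: k v h => [|k IH] v h hv /=; first by rewrite subrr normr0 bound_ge0.
case: ifPn => [_|not_inp]; first by rewrite subrr normr0 bound_ge0.
case: h hv => [|h] hv; first by have := nonsource_height_gt0 not_inp hv.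
set P := (gamma * W) ^+ h * M; set N := (kappa * W) ^+ h * M.
have P_ge1 : 1 <= P := layer_bound_ge1 _ gamma_ge1.
have W0 : 0 <= W := le_trans ler01 W_ge1.
have P_le_N : P <= N.
  by rewrite /P /N layer_bound_mono ?gamma_le_kappa // (le_trans ler01 gamma_ge1).
have edge_le u : E u v ->
    `|f k u * w u v - f' k u * w' u v| <= P * eps + N * eps * W.
  move=> Euv; have hu := height_le_pred hv Euv.
  have -> : f k u * w u v - f' k u * w' u v =
            f k u * (w u v - w' u v) + (f k u - f' k u) * w' u v by ring.
  apply: le_trans (ler_normD _ _) (lerD _ _); rewrite normrM ler_pM ?normr_ge0 //.
  - exact: eval_iter_bound.
  - exact: weight_close.
  - exact: IH.
  - exact: norm_perturbed_weight_le.
have sum_le : `|\sum_(u | E u v) (f k u * w u v - f' k u * w' u v)|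
               <= D * (P * eps + N * eps * W).
  apply: le_trans (ler_norm_sum _ _ _) (sum_indeg_le (indeg_le v) _ edge_le).
  have P0 : 0 <= P := le_trans ler01 P_ge1.
  have N0 : 0 <= N := le_trans P0 P_le_N.
  by apply: addr_ge0; apply: mulr_ge0 => //; apply: mulr_ge0.
apply: le_trans (act_lipschitz _ _ _) _.
rewrite opprD addrACA -sumrB.
apply: le_trans (ler_wpM2l (le_trans ler01 L_ge1)
  (le_trans (ler_normD _ _) (lerD (bias_close v) sum_le))) _.
have -> : (kappa * W) ^+ h.+1 * M * eps = kappa * W * N * eps by rewrite exprS /N; ring.
exact: perturb_step_arith L_ge1 D_ge1 gamma_ge1 W_ge1 P_ge1 P_le_N eps_ge0.
Qed.

End Perturbation.

Theorem lemma6p7 (R : realType) (V : finType) (E : rel V)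
  (a : V -> R -> R) (p q : nat) (inp : 'I_p -> V) (out : 'I_q -> V)
  (d Delta lam : nat)
  (Hacyc : acyclic E)
  (Hinp : injective inp) (Hsrc : forall v, source E v <-> exists i, inp i = v)
  (Hout : injective out) (Hsnk : forall v, sink E v <-> exists j, out j = v)
  (Hd : is_depth E d)
  (HDelta : Delta = max_indeg E) (HDelta1 : (1 <= Delta)%N)
  (Hlam : (0 < lam)%N)
  (Hlip : forall v (s t : R), `|a v s - a v t| <= lam%:R * `|s - t|) :
  let mu := mu_of a in
  let gamma := (2 * Delta * lam * maxn lam mu)%N in
  let nu := ((4 * Delta * lam * gamma) ^ d)%N in
  forall (eps : R) (x : 'I_p -> R) (b b' : V -> R) (w w' : V -> V -> R),
    0 <= Num.max (normV (fun v => b v - b' v))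
                 (normE E (fun u v => w u v - w' u v)) ->
    Num.max (normV (fun v => b v - b' v))
            (normE E (fun u v => w u v - w' u v)) <= eps ->
    eps <= 1 ->
    normI (fun j => net E a inp out x w b j - net E a inp out x w' b' j)
      <= nu%:R * (normE E w + 1) ^+ d * (normI x + normV b + 1) * eps.
Proof.
move=> mu gamma nu eps x b b' w w' dist_ge0 dist_le eps_le1.
have eps_ge0 : 0 <= eps := le_trans dist_ge0 dist_le.
move: dist_le; rewrite ge_max => /andP [bias_le weight_le].
have bias_close v : `|b v - b' v| <= eps.
  exact: le_trans (normV_ge (fun v => b v - b' v) v) bias_le.
have weight_close u v : E u v -> `|w u v - w' u v| <= eps.
  by move=> Euv; apply: le_trans (normE_ge (fun u v => w u v - w' u v) Euv) weight_le.
have L_ge1 : 1 <= lam%:R :> R by rewrite ler1n.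
have D_ge1 : 1 <= Delta%:R :> R by rewrite ler1n.
have L_le_m : lam%:R <= (maxn lam mu)%:R :> R by rewrite ler_nat leq_maxl.
have act0_le v : `|a v 0| <= (maxn lam mu)%:R.
  by apply: le_trans (norm_act0_le_mu a v) _; rewrite ler_nat leq_maxr.
have indeg_le v : #|[set u | E u v]|%:R <= Delta%:R :> R.
  by rewrite ler_nat HDelta (leq_bigmax v).
have source_inp v : source E v -> exists i, inp i = v := (Hsrc v).1.
apply: bigmax_le => [|j _].
  by rewrite !mulr_ge0 ?exprn_ge0 ?addr_ge0 ?normE_ge0 ?normI_ge0 ?normV_ge0.
rewrite /net /node_val.
apply: le_trans (eval_iter_perturb L_ge1 D_ge1 L_le_m act0_le Hlip indeg_le source_inp x
  eps_ge0 eps_le1 bias_close weight_close _ (height_le_depth Hd)) _.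
by rewrite /nu /gamma natrX !natrM exprMn.
Qed.
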